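(* Let $\psi\in\mathcal W^-$, let $Y$ be a compact topological space, and let $f_k,f$ be continuous functions on $Y$ with $f_k\to f$ uniformly. Let $\mu_k,\mu$ be Borel measures on $Y$ of finite mass with $\mu_k\to\mu$ weakly. Then $\int_Y\psi(cf_k)\,d\mu_k\to\int_Y\psi(cf)\,d\mu$ for every $c\in[0,\infty)$, and $\|f_k\|_{\psi,\mu_k}\to\|f\|_{\psi,\mu}$.
   Context: $\mathcal W^-$: functions $\psi:[-\infty,\infty]\to[0,\infty]$, even, continuous on $\mathbb R$, $\psi(0)=0$, $\psi(\pm\infty)=\infty$, smooth, concave, strictly increasing on $(0,\infty)$. For a finite measure $\nu$ and measurable $g$, $\|g\|_{\psi,\nu}=\inf\{N>0:\int_Y\psi(g/N)\,d\nu\le1\}$. *)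

From HB Require Import structures.
From mathcomp Require Import all_boot all_order all_algebra.
From mathcomp Require Import all_classical all_reals all_analysis.
Set Implicit Arguments. Unset Strict Implicit. Unset Printing Implicit Defensive.
Import Order.TTheory GRing.Theory Num.Theory.
Import numFieldNormedType.Exports.
Local Open Scope classical_set_scope.
Local Open Scope ring_scope.

(* The class W^- : psi is even, continuous on R, psi 0 = 0, psi(+-oo) = +oo
   (encoded as psi x -> +oo when x -> +oo; the -oo side follows by evenness),
   nonnegative (codomain [0,oo]), smooth, concave and strictly increasing on
   (0,oo).  Since psi is finite on R it is a function R -> R. *)
Record Wminus (R : realType) (psi : R -> R) : Prop := {
  Wm_even : forall x, psi (- x) = psi x;
  Wm_cont : continuous psi;
  Wm_0 : psi 0 = 0;
  Wm_ge0 : forall x, 0 <= psi x;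
  Wm_infty : psi x @[x --> +oo] --> +oo;
  Wm_smooth : forall (n : nat) (x : R), 0 < x -> derivable (derive1n n psi) x 1;
  Wm_concave : forall x y t : R, 0 < x -> 0 < y -> 0 <= t <= 1 ->
     t * psi x + (1 - t) * psi y <= psi (t * x + (1 - t) * y);
  Wm_incr : forall x y : R, 0 < x -> x < y -> psi x < psi y }.

(* Orlicz (Luxemburg) functional
   ||g||_{psi,nu} = inf { N > 0 : \int psi(g/N) dnu <= 1 }, valued in \bar R
   (inf of the empty set is +oo). *)
Definition orlicz_norm (R : realType) (d : measure_display) (T : measurableType d)
  (psi : R -> R) (nu : {measure set T -> \bar R}) (g : T -> R) : \bar R :=
  ereal_inf [set N%:E | N in
    [set N : R | 0 < N /\ (\int[nu]_x (psi (g x / N))%:E <= 1)%E]].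

Definition borel (Y : ptopologicalType) := g_sigma_algebraType (@open Y).

From HB Require Import structures.
From mathcomp Require Import all_boot all_order all_algebra.
From mathcomp Require Import all_classical all_reals all_analysis.
From mathcomp Require Import measurable_realfun.
From mathcomp Require Import lra.
Set Implicit Arguments. Unset Strict Implicit. Unset Printing Implicit Defensive.
Import Order.TTheory GRing.Theory Num.Theory.
Import numFieldNormedType.Exports.
Local Open Scope classical_set_scope.
Local Open Scope ring_scope.

(* Concavity and psi 0 = 0 make psi subadditive on [0, oo), hence
   |psi s - psi t| <= psi |s - t|.  With continuity of psi at 0, this makes
   \int psi (c f_k) dmu_k - \int psi (c f) dmu_k small once f_k is uniformly
   close to f and the masses mu_k Y are bounded, while
   \int psi (c f) dmu_k -> \int psi (c f) dmu by weak convergence, psi (c f)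
   being continuous.
   The norm of f is the infimum of the N > 0 with Phi (1/N) <= 1, where
   Phi c = \int psi (c f) dmu is nondecreasing and, psi being strictly
   increasing, strictly increasing wherever it is positive.  Hence
   Phi (1/N) < 1 for N > ||f|| and Phi (1/N) > 1 for 0 < N < ||f||; these
   strict inequalities pass to the Phi_k by the first part and trap ||f_k||
   in any neighbourhood of ||f||. *)

Section Wminus_theory.
Variables (R : realType) (psi : R -> R).
Hypothesis psiW : Wminus psi.
Implicit Types a b c e s t u x y : R.

Lemma psi_normr x : psi `|x| = psi x.
Proof. by case: (ger0P x) => _ //; rewrite (Wm_even psiW). Qed.

Lemma psi_normrM c x : 0 <= c -> psi (c * `|x|) = psi (c * x).
Proof. by move=> c0; rewrite -[RHS]psi_normr normrM ger0_norm. Qed.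

Lemma psi_lt x y : 0 <= x -> x < y -> psi x < psi y.
Proof.
rewrite le_eqVlt => /predU1P[<- y0|x0]; last exact: Wm_incr.
rewrite (Wm_0 psiW); apply: le_lt_trans (Wm_ge0 psiW (y / 2)) _.
by apply: (Wm_incr psiW); [rewrite divr_gt0 | rewrite ltr_pdivrMr //; lra].
Qed.

Lemma psi_le x y : 0 <= x -> x <= y -> psi x <= psi y.
Proof. by move=> x0; rewrite le_eqVlt => /predU1P[->//|/(psi_lt x0)/ltW]. Qed.

Lemma psiM_le c (c' : R) x : 0 <= c -> c <= c' -> psi (c * x) <= psi (c' * x).
Proof.
move=> c0 cc'; rewrite -(psi_normrM x c0) -(psi_normrM x (le_trans c0 cc')).
by apply: psi_le; rewrite ?mulr_ge0 ?ler_wpM2r.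
Qed.

Lemma psiM_lt c (c' : R) x : 0 < c -> c < c' -> x != 0 -> psi (c * x) < psi (c' * x).
Proof.
move=> c0 cc' x0; have c'0 := lt_trans c0 cc'.
rewrite -(psi_normrM x (ltW c0)) -(psi_normrM x (ltW c'0)).
apply: psi_lt; first exact: mulr_ge0 (ltW c0) (normr_ge0 x).
by rewrite ltr_pM2r ?normr_gt0.
Qed.

Lemma psi_near0 e : 0 < e -> exists2 d : R, 0 < d & forall u, `|u| < d -> psi u < e.
Proof.
move=> e0; have near0 : \forall u \near 0, `|psi 0 - psi u| < e.
  exact: cvgr_dist_lt (@Wm_cont _ _ psiW 0) _ e0.
have [d /= d0 psi_close] := (nbhs_ballP _ _).1 near0.
exists d => // u ud; have := psi_close u; rewrite /ball /= sub0r normrN => /(_ ud).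
by rewrite (Wm_0 psiW) sub0r normrN ger0_norm ?(Wm_ge0 psiW).
Qed.

(* Concavity is only available between x and points y > 0; let y -> 0+
   using continuity. *)
Lemma psi_scale t x : 0 < t < 1 -> 0 < x -> t * psi x <= psi (t * x).
Proof.
move=> /andP[t0 t1] x0.
apply: (cvgr_to_ge (cvg_at_right_filter (@Wm_cont _ _ psiW (t * x)))).
near=> z.
have tx_z : t * x < z by near: z; exact: nbhs_right_gt.
pose y := (z - t * x) / (1 - t).
have y0 : 0 < y by rewrite divr_gt0 // subr_gt0.
have t01 : 0 <= t <= 1 by rewrite !ltW.
have := Wm_concave psiW x0 y0 t01.
rewrite [(1 - t) * y]mulrC divfK ?subr_eq0 ?gt_eqF // subrKC.
have t1' : 0 <= 1 - t by rewrite subr_ge0 ltW.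
by have := mulr_ge0 t1' (Wm_ge0 psiW y); lra.
Unshelve. all: end_near.
Qed.

Lemma psi_subadd a b : 0 <= a -> 0 <= b -> psi (a + b) <= psi a + psi b.
Proof.
rewrite le_eqVlt => /predU1P[<- _|a0]; first by rewrite add0r (Wm_0 psiW) add0r.
rewrite le_eqVlt => /predU1P[<-|b0]; first by rewrite !addr0 (Wm_0 psiW) addr0.
have ab0 : 0 < a + b by rewrite addr_gt0.
have scale u : 0 < u -> u < a + b -> u / (a + b) * psi (a + b) <= psi u.
  move=> u0 uab; rewrite -{2}[u](@divfK _ (a + b)) ?gt_eqF //.
  by apply: psi_scale => //; rewrite divr_gt0 // ltr_pdivrMr // mul1r.
have := scale a a0; rewrite ltrDl => /(_ b0).
have := scale b b0; rewrite ltrDr => /(_ a0).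
suff: a / (a + b) * psi (a + b) + b / (a + b) * psi (a + b) = psi (a + b) by lra.
by rewrite -mulrDl -mulrDl divff ?gt_eqF // mul1r.
Qed.

Lemma psi_dist s t : `|psi s - psi t| <= psi `|s - t|.
Proof.
rewrite -(psi_normr s) -(psi_normr t).
apply: le_trans (psi_le (normr_ge0 _) (ler_dist_dist s t)).
move: (normr_ge0 s) (normr_ge0 t); move: `|s| `|t| => a b.
wlog ba : a b / b <= a => [W|a0 b0].
  by case: (leP b a) => [/W//|/ltW ab a0 b0]; rewrite distrC (distrC a); apply: W.
rewrite !ger0_norm ?subr_ge0 ?psi_le //.
have := @psi_subadd b (a - b) b0; rewrite subr_ge0 subrKC => /(_ ba); lra.
Qed.

End Wminus_theory.

Lemma cvge_near_bounds {T : Type} {F : set_system T} {FF : Filter F}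
    (R : realFieldType) (u : T -> \bar R) (r : R) :
  (forall e, 0 < e -> \forall t \near F, ((r - e)%:E <= u t <= (r + e)%:E)%E) ->
  u @ F --> r%:E.
Proof.
move=> near_r; apply/fine_cvgP; split.
  apply: filterS (near_r 1 ltr01) => t /andP[lo hi].
  by rewrite fin_numElt (lt_le_trans (ltNyr _) lo) (le_lt_trans hi (ltry _)).
apply/cvgrPdist_le => e e0; apply: filterS (near_r e e0) => t /=.
case: (u t) => [x||] /andP[lo hi] /=; first by rewrite ler_distlC -!lee_fin lo hi.
  by rewrite leye_eq in hi.
by rewrite leeNy_eq in lo.
Qed.

Lemma ge0_lt_integral d (T : measurableType d) (R : realType)
    (nu : {measure set T -> \bar R}) (p q : T -> R) :
  nu.-integrable setT (EFin \o p) -> nu.-integrable setT (EFin \o q) ->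
  (forall x, 0 <= p x <= q x) -> (forall x, 0 < p x -> p x < q x) ->
  (0 < \int[nu]_x (p x)%:E)%E -> (\int[nu]_x (p x)%:E < \int[nu]_x (q x)%:E)%E.
Proof.
move=> ip iq pq p_lt_q p_pos; rewrite ltNge; apply/negP => qp.
have mp := measurable_int _ ip; have mq := measurable_int _ iq.
have mqp : measurable_fun setT (fun x => (q x - p x)%:E).
  by apply/measurable_EFinP/measurable_funB; apply/measurable_EFinP.
have qp0 : (\int[nu]_x `|(q x - p x)%:E| = 0)%E.
  under eq_integral => x _ do rewrite gee0_abs ?lee_fin ?subr_ge0 ?(andP (pq x)).2 //.
  apply/eqP; rewrite eq_le integral_ge0 ?andbT; last first.
    by move=> x _; rewrite lee_fin subr_ge0 (andP (pq x)).2.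
  by under eq_integral => x _ do rewrite EFinB; rewrite integralB_EFin // sube_le0.
have p0 : ae_eq nu setT (EFin \o p) (cst 0%E).
  apply: filterS ((ae_eq_integral_abs nu measurableT mqp).1 qp0) => x + Tx.
  move=> /(_ Tx) [] /eqP; rewrite subr_eq0 /= => /eqP qpx; congr EFin.
  have /andP[p0 _] := pq x; apply/eqP; rewrite eq_le p0 andbT leNgt.
  by apply/negP => /p_lt_q; rewrite qpx ltxx.
move: p_pos; rewrite (ge0_ae_eq_integral _ _ _ _ _ p0) ?integral0 ?ltxx //.
by move=> x _; rewrite lee_fin (andP (pq x)).1.
Qed.

Section continuous_on_compact.
Variables (R : realType) (Y : ptopologicalType).
Implicit Types (nu : {measure set (borel Y) -> \bar R}) (g : Y -> R).

Lemma continuous_borel_measurable g :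
  continuous g -> measurable_fun [set: borel Y] (g : borel Y -> R).
Proof.
move=> cg; apply: (@measurability _ _ (borel Y) R setT g _ (RGenOpens.measurableE R)).
move=> _ [_ [a [b ->]] <-]; rewrite setTI; apply: sub_sigma_algebra.
by move/continuousP: cg; apply; exact: interval_open.
Qed.

Lemma weak_cvg_mass (muk : nat -> {measure set (borel Y) -> \bar R}) nu :
  (forall g, continuous g ->
     (\int[muk k]_x (g x)%:E)%E @[k --> \oo] --> (\int[nu]_x (g x)%:E)%E) ->
  muk k setT @[k --> \oo] --> nu setT.
Proof.
move=> weak; have cst1 : continuous (cst 1 : Y -> R) by move=> ?; exact: cvg_cst.
have int1 (la : {measure set (borel Y) -> \bar R}) :
    (\int[la]_x (cst 1 x)%:E = la setT)%E by rewrite -[RHS]mul1e -integral_cst.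
suff -> : (fun k => muk k setT) = (fun k => \int[muk k]_x (cst 1 x)%:E)%E.
  by rewrite -int1; exact: weak.
by apply/funext => k; rewrite int1.
Qed.

Hypothesis Ycompact : compact [set: Y].

Lemma compact_continuous_bounded g :
  continuous g -> exists M : R, forall y, `|g y| <= M.
Proof.
move=> cg; have /compact_bounded[M [_ M_bound]] : compact (g @` [set: Y]).
  by apply: continuous_compact => //; exact: continuous_subspaceT.
exists (`|M| + 1) => y; apply: M_bound; last by exists y.
by rewrite (le_lt_trans (ler_norm M)) ?ltrDl.
Qed.

Lemma compact_continuous_integrable nu g :
  (nu setT < +oo)%E -> continuous g -> nu.-integrable setT (EFin \o g).
Proof.
move=> nu_fin cg; have [M gM] := compact_continuous_bounded cg.
apply: measurable_bounded_integrable => //; first exact: continuous_borel_measurable.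
by exists M; split=> [|N MN y _]; [exact: num_real|rewrite /= (le_trans (gM y)) ?ltW].
Qed.

End continuous_on_compact.

Section modular.
Variables (R : realType) (psi : R -> R) (Y : ptopologicalType).
Hypotheses (psiW : Wminus psi) (Ycompact : compact [set: Y]).
Implicit Types (nu : {measure set (borel Y) -> \bar R}) (g h : Y -> R) (c d : R).

Definition modular nu g (c : R) := (\int[nu]_x (psi (c * g x))%:E)%E.

Lemma continuous_psiM g c : continuous g -> continuous (fun y => psi (c * g y)).
Proof.
move=> cg y; apply: continuous_comp; last exact: (Wm_cont psiW).
exact: cvgM (cvg_cst _) (cg y).
Qed.

Lemma measurable_psiM g c :
  continuous g -> measurable_fun [set: borel Y] (fun y : borel Y => (psi (c * g y))%:E).
Proof.
move=> cg; apply/measurable_EFinP.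
exact: continuous_borel_measurable (continuous_psiM (c := c) cg).
Qed.

Lemma modular_ge0 nu g c : (0 <= modular nu g c)%E.
Proof. by apply: integral_ge0 => y _; rewrite lee_fin (Wm_ge0 psiW). Qed.

Lemma integrable_psiM nu g c : (nu setT < +oo)%E -> continuous g ->
  nu.-integrable setT (fun y => (psi (c * g y))%:E).
Proof.
by move=> nu_fin cg; apply: compact_continuous_integrable => //; exact: continuous_psiM.
Qed.

Lemma modular_fin_num nu g c : (nu setT < +oo)%E -> continuous g ->
  modular nu g c \is a fin_num.
Proof. by move=> nu_fin cg; apply: integrable_fin_num => //; exact: integrable_psiM. Qed.

Lemma le_modular nu g c (c' : R) : continuous g -> 0 <= c <= c' ->
  (modular nu g c <= modular nu g c')%E.
Proof.
move=> cg /andP[c0 cc']; apply: ge0_le_integral => //; try exact: measurable_psiM.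
  by move=> y _; rewrite lee_fin (Wm_ge0 psiW).
by move=> y _; rewrite lee_fin (psiM_le psiW).
Qed.

Lemma lt_modular nu g c (c' : R) : (nu setT < +oo)%E -> continuous g -> 0 < c < c' ->
  (0 < modular nu g c)%E -> (modular nu g c < modular nu g c')%E.
Proof.
move=> nu_fin cg /andP[c0 cc']; have c'0 := lt_trans c0 cc'.
apply: ge0_lt_integral; try exact: integrable_psiM.
  by move=> y; rewrite (Wm_ge0 psiW) (psiM_le psiW) ?ltW.
move=> y; have [->|gy0] := eqVneq (g y) 0; first by rewrite mulr0 (Wm_0 psiW) ltxx.
by move=> _; apply: (psiM_lt psiW).
Qed.

Lemma modular_dist nu g h c d : (nu setT < +oo)%E -> continuous g -> continuous h ->
  0 <= c -> (forall y, `|g y - h y| <= d) ->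
  (`|modular nu g c - modular nu h c| <= (psi (c * d) * fine (nu setT))%:E)%E.
Proof.
move=> nu_fin cg ch c0 gh_d.
rewrite /modular -integralB_EFin //; try exact: integrable_psiM.
under eq_integral => y _ do rewrite -EFinB.
have mgh : measurable_fun setT (fun y : borel Y => (psi (c * g y) - psi (c * h y))%:E).
  by apply/measurable_EFinP/measurable_funB; apply/measurable_EFinP; exact: measurable_psiM.
apply: le_trans (le_abse_integral _ _ mgh) _ => //.
apply: le_trans (integral_le_bound (psi (c * d))%:E _ mgh _ _) _ => //.
- by rewrite lee_fin (Wm_ge0 psiW).
- apply: aeW => y _; rewrite abse_EFin lee_fin; apply: le_trans (psi_dist psiW _ _) _.
  rewrite -mulrBr normrM ger0_norm //.
  by apply: (psi_le psiW); rewrite ?mulr_ge0 ?ler_wpM2l.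
by rewrite EFinM fineK // ge0_fin_numE.
Qed.

Lemma modular_cst0 nu c : modular nu (cst 0) c = 0%E.
Proof.
rewrite /modular (eq_integral (cst 0%E)) ?integral0 // => y _.
by rewrite /= mulr0 (Wm_0 psiW).
Qed.

Lemma exists_modular_le1 nu g : (nu setT < +oo)%E -> continuous g ->
  exists2 N : R, 0 < N & (modular nu g N^-1 <= 1)%E.
Proof.
move=> nu_fin cg; have [M gM] := compact_continuous_bounded Ycompact cg.
have M0 : 0 <= M := le_trans (normr_ge0 _) (gM point).
set m := fine (nu setT); have m0 : 0 <= m := fine_ge0 (measure_ge0 nu setT).
have m1 : 0 < (m + 1)^-1 by rewrite invr_gt0 ltr_wpDl.
have [d d0 psi_d] := psi_near0 psiW m1.
have N0 : 0 < (M + 1) / d by rewrite divr_gt0 ?ltr_wpDl.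
exists ((M + 1) / d) => //.
have c0 : 0 <= ((M + 1) / d)^-1 by rewrite invr_ge0 ltW.
have cst0 : continuous (cst 0 : Y -> R) by move=> ?; exact: cvg_cst.
have gM0 y : `|g y - cst 0 y| <= M by rewrite subr0.
have := @modular_dist nu g (cst 0) _ M nu_fin cg cst0 c0 gM0.
rewrite modular_cst0 sube0 gee0_abs ?modular_ge0 // => /le_trans; apply.
have psiM : psi (((M + 1) / d)^-1 * M) <= (m + 1)^-1.
  apply/ltW/psi_d; rewrite invf_div normrM (ger0_norm M0) ger0_norm; last first.
    by rewrite divr_ge0 ?ltW ?ltr_wpDl.
  by rewrite mulrAC ltr_pdivrMr ?ltr_wpDl // ltr_pM2l // ltrDl.
rewrite lee_fin (le_trans (ler_wpM2r m0 psiM)) //.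
by rewrite mulrC ler_pdivrMr ?ltr_wpDl // mul1r lerDl.
Qed.

Lemma orlicz_normE nu g : orlicz_norm psi nu g =
  ereal_inf [set N%:E | N in [set N : R | 0 < N /\ (modular nu g N^-1 <= 1)%E]].
Proof.
congr (ereal_inf (image _ _)); apply/funext => N /=; rewrite /modular.
by under [in RHS]eq_integral => y _ do rewrite mulrC.
Qed.

Lemma orlicz_norm_ge0 nu g : (0 <= orlicz_norm psi nu g)%E.
Proof.
by rewrite orlicz_normE; apply: le_ereal_inf_tmp => _ [N [N0 _] <-]; rewrite lee_fin ltW.
Qed.

Lemma orlicz_norm_le nu g N : 0 < N -> (modular nu g N^-1 <= 1)%E ->
  (orlicz_norm psi nu g <= N%:E)%E.
Proof. by move=> N0 gN; rewrite orlicz_normE; apply: ereal_inf_lbound; exists N. Qed.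

Lemma orlicz_norm_ge nu g N : continuous g -> 0 < N -> (1 < modular nu g N^-1)%E ->
  (N%:E <= orlicz_norm psi nu g)%E.
Proof.
move=> cg N0 gN; rewrite orlicz_normE; apply: le_ereal_inf_tmp => _ [N' [N'0 gN'] <-].
rewrite lee_fin leNgt; apply/negP => N'N; move: gN; apply/negP; rewrite -leNgt.
apply: le_trans gN'; apply: le_modular cg _.
by rewrite invr_ge0 ltW // lef_pV2 ?posrE // ltW.
Qed.

Lemma orlicz_norm_fin_num nu g : (nu setT < +oo)%E -> continuous g ->
  orlicz_norm psi nu g \is a fin_num.
Proof.
move=> nu_fin cg; have [N N0 gN] := exists_modular_le1 nu_fin cg.
by rewrite ge0_fin_numE ?orlicz_norm_ge0 // (le_lt_trans (orlicz_norm_le N0 gN)) ?ltry.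
Qed.

(* Some admissible N' < N has modular at N'^-1 at most 1; strict monotonicity
   makes the bound at N^-1 strict, and only a strict bound survives the limit. *)
Lemma modular_lt1 nu g N : (nu setT < +oo)%E -> continuous g -> 0 < N ->
  (orlicz_norm psi nu g < N%:E)%E -> (modular nu g N^-1 < 1)%E.
Proof.
move=> nu_fin cg N0; rewrite orlicz_normE => /ereal_inf_lt[_ [N' [N'0 gN'] <-]].
rewrite lte_fin => N'N.
have := modular_ge0 nu g N^-1.
rewrite le_eqVlt => /predU1P[<-|gN_pos]; first exact: lte01.
apply: lt_le_trans gN'; apply: lt_modular => //.
by rewrite invr_gt0 N0 ltf_pV2 ?posrE.
Qed.

Section modular_convergence.
Variables (muk : nat -> {measure set (borel Y) -> \bar R}) (fk : nat -> Y -> R).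
Hypotheses (muk_fin : forall k, (muk k setT < +oo)%E)
  (fk_cont : forall k, continuous (fk k)).

Lemma modular_sub_cvg0 (f : Y -> R) c (B : R) : continuous f ->
  (forall e : R, 0 < e -> \forall k \near \oo, forall y, `|fk k y - f y| < e) ->
  0 < B -> (\forall k \near \oo, muk k setT <= B%:E)%E -> 0 <= c ->
  (modular (muk k) (fk k) c - modular (muk k) f c)%E @[k --> \oo] --> 0%E.
Proof.
move=> cf fk_unif B0 muk_B c0; apply: (@cvge_near_bounds _ _ _ _ _ 0) => e e0.
have [d d0 psi_d] := psi_near0 psiW (divr_gt0 e0 B0).
have dc0 : 0 < d / (c + 1) by rewrite divr_gt0 ?ltr_wpDl.
apply: filterS2 (fk_unif _ dc0) muk_B => k fk_close mass_B.
have := modular_dist (muk_fin k) (@fk_cont k) cf c0 (fun y => ltW (fk_close y)).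
set x := (_ - _)%E => x_le; suff : (`|x| < e%:E)%E.
  by rewrite lte_absl sub0r add0r EFinN => /andP[lo hi]; rewrite !ltW.
apply: le_lt_trans x_le _; rewrite lte_fin.
have muk_fin_num : muk k setT \is a fin_num by rewrite ge0_fin_numE.
have mass_le : fine (muk k setT) <= B by rewrite -lee_fin fineK.
apply: le_lt_trans (ler_wpM2l (Wm_ge0 psiW _) mass_le) _.
rewrite -ltr_pdivlMr // psi_d // ger0_norm ?(mulr_ge0 c0 (ltW dc0)) //.
by rewrite mulrA ltr_pdivrMr ?ltr_wpDl // mulrC ltr_pM2l // ltrDl.
Qed.

Lemma modular_cvg nu (f : Y -> R) c : continuous f ->
  (forall e : R, 0 < e -> \forall k \near \oo, forall y, `|fk k y - f y| < e) ->
  (nu setT < +oo)%E ->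
  (forall g, continuous g ->
     (\int[muk k]_x (g x)%:E)%E @[k --> \oo] --> (\int[nu]_x (g x)%:E)%E) ->
  0 <= c -> modular (muk k) (fk k) c @[k --> \oo] --> modular nu f c.
Proof.
move=> cf fk_unif nu_fin weak c0.
have nu_fin_num : nu setT \is a fin_num by rewrite ge0_fin_numE.
have B0 : 0 < fine (nu setT) + 1 by rewrite ltr_wpDl ?fine_ge0.
have muk_B : \forall k \near \oo, (muk k setT <= (fine (nu setT) + 1)%:E)%E.
  have nu_lt : (nu setT < (fine (nu setT) + 1)%:E)%E.
    by rewrite EFinD fineK // lteDl.
  near=> k; apply/ltW; near: k.
  exact: weak_cvg_mass weak _ (open_ereal_lt' nu_lt).
rewrite (_ : (fun k => _) = (fun k => (modular (muk k) (fk k) c -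
    modular (muk k) f c) + modular (muk k) f c)%E); last first.
  by apply/funext => k; rewrite subeK // modular_fin_num.
rewrite -[modular nu f c]add0e; apply: cvgeD.
- by apply: fin_num_adde_defl; exact: modular_fin_num.
- exact: modular_sub_cvg0 cf fk_unif B0 muk_B c0.
- exact: weak _ (continuous_psiM (c := c) cf).
Unshelve. all: end_near.
Qed.

Lemma cvg_orlicz_norm nu (f : Y -> R) : continuous f -> (nu setT < +oo)%E ->
  (forall c, 0 <= c -> modular (muk k) (fk k) c @[k --> \oo] --> modular nu f c) ->
  orlicz_norm psi (muk k) (fk k) @[k --> \oo] --> orlicz_norm psi nu f.
Proof.
move=> cf nu_fin modular_cvg_c.
have norm_fin := orlicz_norm_fin_num nu_fin cf.
rewrite -(fineK norm_fin); set r := fine _.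
have r0 : 0 <= r := fine_ge0 (orlicz_norm_ge0 nu f).
apply: cvge_near_bounds => e e0.
have upper : \forall k \near \oo, (orlicz_norm psi (muk k) (fk k) <= (r + e)%:E)%E.
  have re0 : 0 < r + e by rewrite ltr_wpDl.
  have lt1 : (modular nu f (r + e)^-1 < 1)%E.
    by apply: modular_lt1 => //; rewrite -(fineK norm_fin) -/r lte_fin ltrDl.
  have re_inv : 0 <= (r + e)^-1 by rewrite invr_ge0 ltW.
  near=> k; apply: orlicz_norm_le re0 _; apply/ltW; near: k.
  exact: modular_cvg_c _ re_inv _ (open_ereal_lt' lt1).
have lower : \forall k \near \oo, ((r - e)%:E <= orlicz_norm psi (muk k) (fk k))%E.
  have [re0|er] := ltP 0 (r - e); last first.
    by near=> k; apply: le_trans (orlicz_norm_ge0 _ _); rewrite lee_fin.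
  have gt1 : (1 < modular nu f (r - e)^-1)%E.
    rewrite ltNge; apply/negP => /(orlicz_norm_le re0).
    by rewrite -(fineK norm_fin) -/r lee_fin; lra.
  have re_inv : 0 <= (r - e)^-1 by rewrite invr_ge0 ltW.
  near=> k; apply: orlicz_norm_ge (@fk_cont k) re0 _; near: k.
  exact: modular_cvg_c _ re_inv _ (open_ereal_gt' gt1).
by apply: filterS2 lower upper => k -> ->.
Unshelve. all: end_near.
Qed.

End modular_convergence.

End modular.

Unset Implicit Arguments.

Theorem lemma2p8 (R : realType) (psi : R -> R) (Y : ptopologicalType)
  (fk : nat -> Y -> R) (f : Y -> R)
  (muk : nat -> {measure set (borel Y) -> \bar R})
  (mu : {measure set (borel Y) -> \bar R}) :
  Wminus psi ->
  compact [set: Y] ->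
  (forall k, continuous (fk k)) ->
  continuous f ->
  (* f_k -> f uniformly on Y *)
  (forall e : R, 0 < e -> \forall k \near \oo, forall y : Y, `|fk k y - f y| < e) ->
  (* finite mass *)
  (forall k, (muk k setT < +oo)%E) ->
  (mu setT < +oo)%E ->
  (* weak convergence: against every (bounded) continuous function on Y *)
  (forall g : Y -> R, continuous g ->
     (\int[muk k]_x (g x)%:E)%E @[k --> \oo] --> (\int[mu]_x (g x)%:E)%E) ->
  (forall c : R, 0 <= c ->
     (\int[muk k]_x (psi (c * fk k x))%:E)%E @[k --> \oo]
       --> (\int[mu]_x (psi (c * f x))%:E)%E)
  /\ orlicz_norm psi (muk k) (fk k) @[k --> \oo] --> orlicz_norm psi mu f.
Proof.
move=> psiW Ycompact fk_cont f_cont fk_unif muk_fin mu_fin weak.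
have modular_conv c : 0 <= c ->
    modular psi (muk k) (fk k) c @[k --> \oo] --> modular psi mu f c.
  move=> c0.
  by apply: (modular_cvg psiW Ycompact muk_fin fk_cont f_cont fk_unif mu_fin weak c0).
split; first exact: modular_conv.
by apply: (cvg_orlicz_norm psiW Ycompact fk_cont f_cont mu_fin modular_conv).
Qed.
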